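(* Let $p,q$ be positive integers and let $s_1,\dots,s_p,d_1,\dots,d_q:[0,1]\to[0,1]$ be the truth functions of the hedge connectives of FLn with many hedges; that is, writing $s_0=d_0=\mathrm{id}_{[0,1]}$, they make all hedge axioms tautologies, which means that for all $a,b\in[0,1]$: (1) $a\Rightarrow b\ \le\ h(a)\Rightarrow h(b)$ for every $h\in\{s_1,\dots,s_p,d_1,\dots,d_q\}$; (2) $s_i(a)\le s_{i-1}(a)$ for $i=1,\dots,p$; (3) $s_p(1)=1$; (4) $d_{j-1}(a)\le d_j(a)$ for $j=1,\dots,q$; (5) $d_q(0)=0$. Then for every $h\in\{s_1,\dots,s_p,d_1,\dots,d_q\}$, $h$ is non-decreasing, $h(0)=0$ and $h(1)=1$.
   Context: Truth values form the Łukasiewicz algebra on $[0,1]$ with $a\Rightarrow b=\min(1,1-a+b)$. FLn with many hedges extends the first-order fuzzy logic FLn (with logical constants $\overline{a}$ for every $a\in[0,1]$, implication $\to$, negation $\neg A\equiv A\to\overline{0}$) by unary connectives $s_1,\dots,s_p$ (truth-stressing hedges) and $d_1,\dots,d_q$ (truth-depressing hedges), with $s_0,d_0$ denoting the identity connective, and adds the logical axioms (in degree 1) $(A\to B)\to(hA\to hB)$ for all hedges $h$; $s_iA\to s_{i-1}A$ ($i=1,\dots,p$); $s_p\overline{1}$; $d_{j-1}A\to d_jA$ ($j=1,\dots,q$); $\neg d_q\overline{0}$. Conditions (1)–(5) are exactly the requirement that these axioms take truth value 1 in every structure, where a hedge $h$ is interpreted by its truth function: $\mathcal{D}(hA)=h(\mathcal{D}(A))$.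 *)

From Stdlib Require Import Reals.
Open Scope R_scope.

Definition in01 (a : R) : Prop := 0 <= a <= 1.

(* Lukasiewicz residuum: a => b = min(1, 1 - a + b). *)
Definition luk_imp (a b : R) : R := Rmin 1 (1 - a + b).

Definition maps01 (h : R -> R) : Prop := forall a, in01 a -> in01 (h a).

Definition hedge_compat (h : R -> R) : Prop :=
  forall a b, in01 a -> in01 b -> luk_imp a b <= luk_imp (h a) (h b).

Definition nondecr01 (h : R -> R) : Prop :=
  forall a b, in01 a -> in01 b -> a <= b -> h a <= h b.

From Stdlib Require Import Reals Lra Lia.
Open Scope R_scope.

(* Each stressing hedge is squeezed between [s_p] and [s_0 = id] (and each
   depressing one between [d_0 = id] and [d_q]), which pins down the values at
   0 and 1; monotonicity follows from condition (1) alone, since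
   [a <= b] forces [a => b = 1]. *)

Lemma antitone_step_chain (n : nat) (f : nat -> R) :
  (forall i, (1 <= i <= n)%nat -> f i <= f (i - 1)%nat) ->
  forall i j, (i <= j <= n)%nat -> f j <= f i.
Proof.
  intros Hstep i j Hij.
  induction j as [|j IH].
  - replace i with 0%nat by lia. lra.
  - destruct (Nat.eq_dec i (S j)) as [-> | Hne]; [lra |].
    assert (Hlast := Hstep (S j) ltac:(lia)).
    replace (S j - 1)%nat with j in Hlast by lia.
    assert (IH' := IH ltac:(lia)). lra.
Qed.

Lemma monotone_step_chain (n : nat) (f : nat -> R) :
  (forall i, (1 <= i <= n)%nat -> f (i - 1)%nat <= f i) ->
  forall i j, (i <= j <= n)%nat -> f i <= f j.
Proof.
  intros Hstep i j Hij.
  assert (H := antitone_step_chain n (fun k => - f k)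
                 ltac:(intros k Hk; specialize (Hstep k Hk); lra) i j Hij).
  simpl in H. lra.
Qed.

Lemma hedge_compat_nondecr01 (h : R -> R) : hedge_compat h -> nondecr01 h.
Proof.
  intros Hh a b Ha Hb Hab.
  specialize (Hh a b Ha Hb).
  unfold luk_imp, Rmin in Hh.
  destruct (Rle_dec 1 (1 - a + b)); destruct (Rle_dec 1 (1 - h a + h b)); lra.
Qed.

Lemma in01_0 : in01 0.
Proof. unfold in01; lra. Qed.

Lemma in01_1 : in01 1.
Proof. unfold in01; lra. Qed.

Theorem mainTheorem1 (p q : nat) (s d : nat -> R -> R) :
  (1 <= p)%nat -> (1 <= q)%nat ->
  (forall a, s 0%nat a = a) -> (forall a, d 0%nat a = a) ->
  (forall i, (1 <= i <= p)%nat -> maps01 (s i)) ->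
  (forall j, (1 <= j <= q)%nat -> maps01 (d j)) ->
  (* (1) *)
  (forall i, (1 <= i <= p)%nat -> hedge_compat (s i)) ->
  (forall j, (1 <= j <= q)%nat -> hedge_compat (d j)) ->
  (* (2) *)
  (forall i a, (1 <= i <= p)%nat -> in01 a -> s i a <= s (i - 1)%nat a) ->
  (* (3) *)
  s p 1 = 1 ->
  (* (4) *)
  (forall j a, (1 <= j <= q)%nat -> in01 a -> d (j - 1)%nat a <= d j a) ->
  (* (5) *)
  d q 0 = 0 ->
  (forall i, (1 <= i <= p)%nat -> nondecr01 (s i) /\ s i 0 = 0 /\ s i 1 = 1) /\
  (forall j, (1 <= j <= q)%nat -> nondecr01 (d j) /\ d j 0 = 0 /\ d j 1 = 1).
Proof.
  intros Hp Hq s0_id d0_id s_01 d_01 s_compat d_compat s_step sp1 d_step dq0.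
  split.
  - intros i Hi.
    destruct (s_01 i Hi 0 in01_0) as [s0_ge _].
    destruct (s_01 i Hi 1 in01_1) as [_ s1_le].
    assert (s0_le := antitone_step_chain p (fun k => s k 0)
                       (fun k Hk => s_step k 0 Hk in01_0) 0 i ltac:(lia)).
    assert (s1_ge := antitone_step_chain p (fun k => s k 1)
                       (fun k Hk => s_step k 1 Hk in01_1) i p ltac:(lia)).
    simpl in s0_le, s1_ge. rewrite s0_id in s0_le.
    repeat split; [apply hedge_compat_nondecr01, s_compat, Hi | lra | lra].
  - intros j Hj.
    destruct (d_01 j Hj 0 in01_0) as [d0_ge _].
    destruct (d_01 j Hj 1 in01_1) as [_ d1_le].
    assert (d0_le := monotone_step_chain q (fun k => d k 0)
                       (fun k Hk => d_step k 0 Hk in01_0) j q ltac:(lia)).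
    assert (d1_ge := monotone_step_chain q (fun k => d k 1)
                       (fun k Hk => d_step k 1 Hk in01_1) 0 j ltac:(lia)).
    simpl in d0_le, d1_ge. rewrite d0_id in d1_ge.
    repeat split; [apply hedge_compat_nondecr01, d_compat, Hj | lra | lra].
Qed.
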